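(* Let $\omega$ be a circle with center $O$ and $\eta$ an ellipse with center $O$ containing $\omega$ in its interior. Let $(v_1,\dots,v_n)$ be a closed polygon with all vertices on $\eta$ and all sides tangent to $\omega$, and let $\alpha_i$ be its angle at $v_i$. Then both \[\sum_{i=1}^n\cos\alpha_i\quad\text{and}\quad\prod_{i=1}^n\cos\angle v_iOv_{i+1}\] are constant in the Poncelet family of $n$-gons containing $(v_1,\dots,v_n)$.
   Context: Indices are mod $n$. A Poncelet $n$-gon for a pair of conics $(C,D)$, $D$ inside $C$, is a closed polygon with all vertices on $C$ and all sides tangent to $D$. By the Poncelet porism, if one such closed $n$-gon exists, then starting from any point of $C$ and successively drawing tangent lines to $D$ (in the same rotational sense) produces a closed $n$-gon; the Poncelet family is this continuous 1-parameter family. Here $C=\eta$, $D=\omega$. The angle $\alpha_i$ is the angle at $v_i$ between the segments $v_iv_{i-1}$ and $v_iv_{i+1}$; $\angle v_iOv_{i+1}\in[0,\pi]$ is the angle between the vectors $v_i-O$ and $v_{i+1}-O$. *)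

From Stdlib Require Import Reals Lra.
Open Scope R_scope.

Definition pt := (R * R)%type.
Definition dot (p q : pt) : R := fst p * fst q + snd p * snd q.
Definition cross (p q : pt) : R := fst p * snd q - snd p * fst q.
Definition vsub (p q : pt) : pt := (fst p - fst q, snd p - snd q).
Definition vnorm (p : pt) : R := sqrt (dot p p).

Definition on_circle (O : pt) (r : R) (x : pt) : Prop := vnorm (vsub x O) = r.

(* Quadratic form of the ellipse eta with center O, semi-axes a, b and axes
   rotated by angle th: eta = { x | ellq O a b th x = 1 },
   interior of eta = { x | ellq O a b th x < 1 }. *)
Definition ellq (O : pt) (a b th : R) (x : pt) : R :=
  let u := fst x - fst O in let w := snd x - snd O in
  ((u * cos th + w * sin th) / a) ^ 2 + ((- u * sin th + w * cos th) / b) ^ 2.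
Definition on_ellipse (O : pt) (a b th : R) (x : pt) : Prop := ellq O a b th x = 1.

Definition on_line (p q x : pt) : Prop :=
  exists t : R, x = (fst p + t * (fst q - fst p), snd p + t * (snd q - snd p)).

Definition tangent_to_circle (O : pt) (r : R) (p q : pt) : Prop :=
  p <> q /\ exists! x : pt, on_line p q x /\ on_circle O r x.

Definition angle (p c q : pt) : R :=
  acos (dot (vsub p c) (vsub q c) / (vnorm (vsub p c) * vnorm (vsub q c))).

(* A polygon with n vertices is v 0, ..., v (n-1); indices taken mod n. *)
Definition vtx (v : nat -> pt) (n i : nat) : pt := v (Nat.modulo i n).

(* Closed Poncelet n-gon for (eta, omega), traversed in rotational sense
   [ccw]: all vertices on eta, every side v_i v_{i+1} tangent to omega, and
   the centre O lies strictly on the left (ccw = true) resp. right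
   (ccw = false) of every directed side, i.e. successive tangent lines are
   drawn in the same rotational sense. *)
Definition poncelet_ngon (O : pt) (r a b th : R) (ccw : bool) (n : nat)
    (v : nat -> pt) : Prop :=
  forall i : nat, (i < n)%nat ->
    on_ellipse O a b th (vtx v n i) /\
    tangent_to_circle O r (vtx v n i) (vtx v n (S i)) /\
    (if ccw
     then 0 < cross (vsub (vtx v n (S i)) (vtx v n i)) (vsub O (vtx v n i))
     else cross (vsub (vtx v n (S i)) (vtx v n i)) (vsub O (vtx v n i)) < 0).

Definition alpha (v : nat -> pt) (n i : nat) : R :=
  angle (vtx v n (i + n - 1)) (vtx v n i) (vtx v n (S i)).

Definition sum_cos_alpha (v : nat -> pt) (n : nat) : R :=
  sum_f_R0 (fun i => cos (alpha v n i)) (n - 1).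

Definition prod_cos_central (O : pt) (v : nat -> pt) (n : nat) : R :=
  prod_f_R0 (fun i => cos (angle (vtx v n i) O (vtx v n (S i)))) (n - 1).

From Stdlib Require Import Reals Lra Psatz Nsatz Lia IndefiniteDescription.
From Coquelicot Require Import Coquelicot.
Open Scope R_scope.

(* Parametrise the tangents to the circle by the angle [x] of their point of
   contact, measured from an axis of the ellipse.  Consecutive sides of a
   Poncelet polygon lie on tangents with angles [x] and [next x], for an
   explicit analytic lift [next] of a circle map, and [1 / weight] with
   [weight = 2 sqrt disc] is an invariant density of [next].  In the coordinate
   [pint = int dx / weight] the map [next] is therefore a translation, which
   gives the porism: if one orbit closes up after [n] steps, all orbits do,
   with the same total turn [c].  Along an orbit,
   [cos alpha_i = - cos (x_(i+1) - x_i)] and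
   [cos (v_i O v_(i+1)) = cos ((x_(i+1) - x_(i-1)) / 2)].  Differentiating in
   the starting angle, the derivative of the sum and the logarithmic
   derivative of the product telescope to expressions in [x_0] and [x_n] only,
   which vanish on closed orbits since [x_n = x_0 + c]. *)

Lemma cos_add_2atan x s :
  cos (x + 2 * atan s) = (cos x * (1 - s^2) - sin x * (2 * s)) / (1 + s^2).
Proof.
  rewrite cos_plus. replace (2 * atan s) with (atan s + atan s) by ring.
  rewrite cos_plus, sin_plus, cos_atan, sin_atan.
  assert (Hu : 0 < sqrt (1 + s²)) by (apply sqrt_lt_R0; unfold Rsqr; nra).
  assert (Hu2 : sqrt (1 + s²) * sqrt (1 + s²) = 1 + s^2)
    by (rewrite sqrt_sqrt; unfold Rsqr; nra).
  rewrite <- Hu2. field. lra.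
Qed.

Lemma sin_add_2atan x s :
  sin (x + 2 * atan s) = (sin x * (1 - s^2) + cos x * (2 * s)) / (1 + s^2).
Proof.
  rewrite sin_plus. replace (2 * atan s) with (atan s + atan s) by ring.
  rewrite cos_plus, sin_plus, cos_atan, sin_atan.
  assert (Hu : 0 < sqrt (1 + s²)) by (apply sqrt_lt_R0; unfold Rsqr; nra).
  assert (Hu2 : sqrt (1 + s²) * sqrt (1 + s²) = 1 + s^2)
    by (rewrite sqrt_sqrt; unfold Rsqr; nra).
  rewrite <- Hu2. field. lra.
Qed.

Lemma derive_zero_const (f : R -> R) :
  (forall y, is_derive f y 0) -> forall y z, f y = f z.
Proof.
  intros H y z. destruct (MVT_gen f y z (fun _ => 0)) as [c [_ Hc]].
  - intros; apply H.
  - intros x _. apply continuity_pt_filterlim, (ex_derive_continuous (V := R_NormedModule)).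
    exists 0. apply H.
  - lra.
Qed.

Lemma derive_pos_injective (f df : R -> R) :
  (forall y, is_derive f y (df y)) -> (forall y, 0 < df y) ->
  forall y z, f y = f z -> y = z.
Proof.
  intros H Hp y z E. destruct (MVT_gen f y z df) as [c [_ Hc]].
  - intros; apply H.
  - intros x _. apply continuity_pt_filterlim, (ex_derive_continuous (V := R_NormedModule)).
    exists (df x). apply H.
  - specialize (Hp c). destruct (Req_dec y z) as [|Hne]; auto.
    assert (df c * (z - y) <> 0) by (apply Rmult_integral_contrapositive; split; lra).
    lra.
Qed.

Lemma is_derive_eq (f : R -> R) x e v : is_derive f x e -> e = v -> is_derive f x v.
Proof. now intros H ->. Qed.

Definition full_turn (c : R) : Prop := cos c = 1 /\ sin c = 0.

Lemma cos_add_turn c x : full_turn c -> cos (x + c) = cos x.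
Proof. intros [H1 H2]. rewrite cos_plus, H1, H2. ring. Qed.

Lemma sin_add_turn c x : full_turn c -> sin (x + c) = sin x.
Proof. intros [H1 H2]. rewrite sin_plus, H1, H2. ring. Qed.

Lemma full_turn_double c : full_turn c -> full_turn (2 * c).
Proof.
  intros Hc. replace (2 * c) with (c + c) by ring.
  split; [rewrite cos_add_turn | rewrite sin_add_turn]; auto; apply Hc.
Qed.

Section TangentMap.

Variables r a b : R.
Hypotheses (r_gt0 : 0 < r) (a_gt0 : 0 < a) (b_gt0 : 0 < b).

(* [ell_quad x s = 1] is the equation of the ellipse, centred at the origin
   with axes along the coordinate axes, at the point at distance [r s] along
   the tangent to the circle of radius [r] at its point of angle [x]. *)
Definition ell_quad (x s : R) : R :=
  r^2 * ((cos x - s * sin x)^2 / a^2 + (sin x + s * cos x)^2 / b^2).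

Definition quad2 (x : R) : R := r^2 * ((sin x)^2 / a^2 + (cos x)^2 / b^2).
Definition quad1 (x : R) : R := r^2 * sin x * cos x * (1 / b^2 - 1 / a^2).
Definition quad0 (x : R) : R := r^2 * ((cos x)^2 / a^2 + (sin x)^2 / b^2).

Lemma ell_quad_expand x s :
  ell_quad x s = quad2 x * s^2 + 2 * quad1 x * s + quad0 x.
Proof. unfold ell_quad, quad2, quad1, quad0. field. lra. Qed.

Lemma ell_quad_opp x s : ell_quad (- x) (- s) = ell_quad x s.
Proof. unfold ell_quad. rewrite cos_neg, sin_neg. field. lra. Qed.

Lemma ell_quad_reverse x s : ell_quad (x + 2 * atan s) (- s) = ell_quad x s.
Proof.
  unfold ell_quad. rewrite cos_add_2atan, sin_add_2atan.
  assert (Hw : 0 < 1 + s^2) by nra.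
  replace ((cos x * (1 - s ^ 2) - sin x * (2 * s)) / (1 + s ^ 2)
           - - s * ((sin x * (1 - s ^ 2) + cos x * (2 * s)) / (1 + s ^ 2)))
    with (cos x - s * sin x) by (field; lra).
  replace ((sin x * (1 - s ^ 2) + cos x * (2 * s)) / (1 + s ^ 2)
           + - s * ((cos x * (1 - s ^ 2) - sin x * (2 * s)) / (1 + s ^ 2)))
    with (sin x + s * cos x) by (field; lra).
  reflexivity.
Qed.

Lemma quad2_pos x : 0 < quad2 x.
Proof.
  unfold quad2. assert (H := sin2_cos2 x). unfold Rsqr in H.
  assert (0 < / a^2) by (apply Rinv_0_lt_compat; nra).
  assert (0 < / b^2) by (apply Rinv_0_lt_compat; nra).
  unfold Rdiv. apply Rmult_lt_0_compat; [nra|].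
  destruct (Rle_lt_dec (sin x ^ 2) (1 / 2)); nra.
Qed.

(* [quad0 x < 1] says that the point of tangency lies inside the ellipse. *)
Hypothesis contact_inside : forall x, quad0 x < 1.

Lemma ell_quad_roots_opposite x s1 s2 :
  ell_quad x s1 = 1 -> ell_quad x s2 = 1 -> s1 <> s2 -> s1 * s2 < 0.
Proof.
  rewrite !ell_quad_expand. intros H1 H2 Hne.
  pose proof (quad2_pos x). pose proof (contact_inside x).
  assert (Hsum : quad2 x * (s1 + s2) + 2 * quad1 x = 0).
  { apply Rmult_eq_reg_l with (s1 - s2); [|lra]. ring_simplify. nra. }
  assert (quad0 x - 1 = quad2 x * s1 * s2) by nra.
  nra.
Qed.

Definition disc (x : R) : R := quad1 x ^ 2 + quad2 x * (1 - quad0 x).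

Lemma disc_pos x : 0 < disc x.
Proof.
  pose proof (quad2_pos x). pose proof (contact_inside x). unfold disc. nra.
Qed.

Definition weight (x : R) : R := 2 * sqrt (disc x).

Lemma weight_pos x : 0 < weight x.
Proof. unfold weight. pose proof (sqrt_lt_R0 _ (disc_pos x)). lra. Qed.

Lemma ell_quad_root_sign x s : ell_quad x s = 1 -> 0 < s * (quad2 x * s + quad1 x).
Proof.
  rewrite ell_quad_expand. intros H.
  pose proof (quad2_pos x). pose proof (contact_inside x).
  assert (0 < s * (quad2 x * s + 2 * quad1 x)) by nra.
  nra.
Qed.

Lemma weight_root x s :
  ell_quad x s = 1 -> weight x = 2 * Rabs (quad2 x * s + quad1 x).
Proof.
  intros H. unfold weight. f_equal. rewrite <- sqrt_Rsqr_abs. f_equal.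
  rewrite ell_quad_expand in H. unfold disc, Rsqr. nra.
Qed.

Definition fwd (x : R) : R := (- quad1 x + sqrt (disc x)) / quad2 x.

Lemma ell_quad_fwd x : ell_quad x (fwd x) = 1.
Proof.
  pose proof (quad2_pos x). pose proof (disc_pos x).
  assert (Hs := sqrt_sqrt _ (Rlt_le _ _ H0)).
  rewrite ell_quad_expand. unfold fwd. unfold disc in Hs.
  apply Rmult_eq_reg_l with (quad2 x); [|lra].
  field_simplify; [|lra]. replace (sqrt (disc x) ^ 2) with (sqrt (disc x) * sqrt (disc x)) by ring.
  unfold disc. rewrite Hs. field.
Qed.

Lemma weight_fwd x : weight x = 2 * (quad2 x * fwd x + quad1 x).
Proof. pose proof (quad2_pos x). unfold weight, fwd. field. lra. Qed.

Lemma fwd_pos x : 0 < fwd x.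
Proof.
  pose proof (ell_quad_root_sign _ _ (ell_quad_fwd x)) as Hs.
  pose proof (weight_pos x). rewrite weight_fwd in H. nra.
Qed.

Lemma fwd_unique x s : 0 < s -> ell_quad x s = 1 -> s = fwd x.
Proof.
  intros Hs H. pose proof (quad2_pos x).
  pose proof (ell_quad_root_sign _ _ H) as Hsg.
  pose proof (weight_root _ _ H) as Hw. rewrite weight_fwd, Rabs_pos_eq in Hw by nra.
  apply Rmult_eq_reg_l with (quad2 x); lra.
Qed.

Definition next (x : R) : R := x + 2 * atan (fwd x).

(* The relation [corr x y = 0] between consecutive tangent angles; it is
   symmetric in [x] and [y], and [corr_dx], [corr_dy] are its partial
   derivatives. *)
Definition kappa : R := r^2 * (1 / a^2 - 1 / b^2).
Definition corr (x y : R) : R :=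
  cos (y - x) - kappa * cos (y + x) - (r^2 * (1 / a^2 + 1 / b^2) - 1).
Definition corr_dx (x y : R) : R := sin (y - x) + kappa * sin (y + x).
Definition corr_dy (x y : R) : R := - sin (y - x) + kappa * sin (y + x).

Lemma corr_dx_dy x y : corr_dx x y = corr_dy y x.
Proof.
  unfold corr_dx, corr_dy. replace (y - x) with (- (x - y)) by ring.
  rewrite sin_neg, (Rplus_comm y x). ring.
Qed.

Lemma corr_root x s : ell_quad x s = 1 -> corr x (x + 2 * atan s) = 0.
Proof.
  intros HE. unfold corr. rewrite (cos_minus (x + 2 * atan s) x), (cos_plus (x + 2 * atan s) x).
  assert (Hw : 0 < 1 + s^2) by nra.
  assert (E1 := cos_add_2atan x s). assert (E2 := sin_add_2atan x s).
  set (cp := cos (x + 2 * atan s)) in *. set (sp := sin (x + 2 * atan s)) in *.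
  assert (E1' : (1 + s^2) * cp = cos x * (1 - s^2) - sin x * (2 * s)) by (rewrite E1; field; lra).
  assert (E2' : (1 + s^2) * sp = sin x * (1 - s^2) + cos x * (2 * s)) by (rewrite E2; field; lra).
  assert (HH := sin2_cos2 x). unfold Rsqr in HH.
  unfold ell_quad in HE. unfold kappa.
  set (ia := 1 / a^2) in *. set (ib := 1 / b^2) in *.
  assert (HE' : r^2 * ((cos x - s * sin x)^2 * ia + (sin x + s * cos x)^2 * ib) = 1).
  { rewrite <- HE. unfold ia, ib. field. lra. }
  apply Rmult_eq_reg_l with (1 + s^2); [|lra].
  clear E1 E2 HE. clearbody ia ib cp sp. cbn [pow] in *. nsatz.
Qed.

Lemma corr_dy_root x s :
  ell_quad x s = 1 -> corr_dy x (x + 2 * atan s) = -2 * (quad2 x * s + quad1 x).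
Proof.
  intros HE. unfold corr_dy. rewrite (sin_minus (x + 2 * atan s) x), (sin_plus (x + 2 * atan s) x).
  assert (Hw : 0 < 1 + s^2) by nra.
  assert (E1 := cos_add_2atan x s). assert (E2 := sin_add_2atan x s).
  set (cp := cos (x + 2 * atan s)) in *. set (sp := sin (x + 2 * atan s)) in *.
  assert (E1' : (1 + s^2) * cp = cos x * (1 - s^2) - sin x * (2 * s)) by (rewrite E1; field; lra).
  assert (E2' : (1 + s^2) * sp = sin x * (1 - s^2) + cos x * (2 * s)) by (rewrite E2; field; lra).
  assert (HH := sin2_cos2 x). unfold Rsqr in HH.
  unfold ell_quad in HE. unfold kappa, quad2, quad1.
  set (ia := 1 / a^2) in *. set (ib := 1 / b^2) in *.
  assert (HE' : r^2 * ((cos x - s * sin x)^2 * ia + (sin x + s * cos x)^2 * ib) = 1).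
  { rewrite <- HE. unfold ia, ib. field. lra. }
  assert (Hia : ia = / a^2) by (unfold ia; field; lra).
  assert (Hib : ib = / b^2) by (unfold ib; field; lra).
  unfold Rdiv. rewrite <- Hia, <- Hib.
  apply Rmult_eq_reg_l with (1 + s^2); [|lra].
  clear E1 E2 HE Hia Hib. clearbody ia ib cp sp. cbn [pow] in *. nsatz.
Qed.

Lemma corr_next x : corr x (next x) = 0.
Proof. apply corr_root, ell_quad_fwd. Qed.

Lemma corr_dy_next x : corr_dy x (next x) = - weight x.
Proof. unfold next. rewrite corr_dy_root by apply ell_quad_fwd. rewrite weight_fwd. ring. Qed.

(* [x] is recovered from [next x] by the negative root [- fwd x]. *)
Lemma corr_dx_next x : corr_dx x (next x) = weight (next x).
Proof.
  rewrite corr_dx_dy. pose proof (fwd_pos x) as Ht.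
  set (t := fwd x) in Ht. set (y := next x).
  assert (Hx : x = y + 2 * atan (- t)) by (unfold y, next, t; rewrite atan_opp; ring).
  assert (HE : ell_quad y (- t) = 1)
    by (unfold y, next, t; rewrite ell_quad_reverse; apply ell_quad_fwd).
  pose proof (ell_quad_root_sign _ _ HE) as Hsg.
  rewrite Hx, corr_dy_root, (weight_root _ _ HE) by exact HE.
  rewrite Rabs_left by nra. ring.
Qed.

Lemma ex_derive_disc x : ex_derive disc x.
Proof.
  unfold disc, quad2, quad1, quad0. auto_derive. repeat split; apply Rgt_not_eq; nra.
Qed.

Lemma ex_derive_fwd x : ex_derive fwd x.
Proof.
  pose proof (quad2_pos x). pose proof (disc_pos x). pose proof (ex_derive_disc x).
  unfold fwd. auto_derive. repeat split; auto; try lra.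
  - unfold quad1. auto_derive. auto.
  - unfold quad2. auto_derive. repeat split; apply Rgt_not_eq; nra.
Qed.

Lemma is_derive_next x : is_derive next x (weight (next x) / weight x).
Proof.
  assert (Hn : ex_derive next x) by (unfold next; auto_derive; apply ex_derive_fwd).
  assert (H0 : is_derive (fun y => corr y (next y)) x 0).
  { apply is_derive_ext with (fun _ => 0); [intros; symmetry; apply corr_next|].
    auto_derive; auto. }
  assert (H1 : is_derive (fun y => corr y (next y)) x
                 (corr_dx x (next x) + corr_dy x (next x) * Derive next x)).
  { unfold corr, corr_dx, corr_dy. auto_derive; [now repeat split|].
    change (fun y => next y) with next. unfold Rminus. ring. }
  pose proof (is_derive_unique _ _ _ H0) as U0. pose proof (is_derive_unique _ _ _ H1) as U1.
  rewrite U0 in U1. rewrite corr_dx_next, corr_dy_next in U1.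
  replace (weight (next x) / weight x) with (Derive next x).
  - now apply Derive_correct.
  - pose proof (weight_pos x). field_simplify_eq; lra.
Qed.

Fixpoint nextn (j : nat) (x : R) : R :=
  match j with O => x | S j => next (nextn j x) end.

Lemma is_derive_nextn j x : is_derive (nextn j) x (weight (nextn j x) / weight x).
Proof.
  pose proof (weight_pos x). induction j as [|j IH]; simpl.
  - replace (weight x / weight x) with 1 by (field; lra). apply (is_derive_id x).
  - refine (is_derive_eq _ _ _ _ (is_derive_comp next (nextn j) x _ _ (is_derive_next _) IH) _).
    pose proof (weight_pos (nextn j x)). unfold scal; simpl; unfold mult; simpl. field. lra.
Qed.

Lemma weight_add_turn c x : full_turn c -> weight (x + c) = weight x.
Proof.
  intros Hc. unfold weight, disc, quad2, quad1, quad0.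
  now rewrite !(cos_add_turn c x Hc), !(sin_add_turn c x Hc).
Qed.

Lemma next_add_turn c x : full_turn c -> next (x + c) = next x + c.
Proof.
  intros Hc. unfold next, fwd, disc, quad2, quad1, quad0.
  rewrite !(cos_add_turn c x Hc), !(sin_add_turn c x Hc). ring.
Qed.

(* [1 / weight] is an invariant density of [next]: in the coordinate [pint]
   the map [next] becomes a translation. *)
Definition pint (y : R) : R := RInt (fun z => / weight z) 0 y.

Lemma is_derive_pint y : is_derive pint y (/ weight y).
Proof.
  assert (Hc : forall z, continuous (fun z => / weight z) z).
  { intros z. apply (ex_derive_continuous (V := R_NormedModule)).
    pose proof (disc_pos z). pose proof (weight_pos z). pose proof (ex_derive_disc z).
    unfold weight in *. auto_derive. repeat split; auto; lra. }
  apply (is_derive_RInt (fun z => / weight z) pint 0 y); [|apply Hc].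
  apply filter_forall. intros z. apply (RInt_correct (V := R_CompleteNormedModule)).
  apply (ex_RInt_continuous (V := R_CompleteNormedModule)). intros; apply Hc.
Qed.

Lemma pint_shift_const (g : R -> R) :
  (forall y, is_derive g y (weight (g y) / weight y)) ->
  forall y, pint (g y) - pint y = pint (g 0) - pint 0.
Proof.
  intros Hg y. apply (derive_zero_const (fun y => pint (g y) - pint y)). clear y. intros z.
  pose proof (weight_pos z). pose proof (weight_pos (g z)).
  refine (is_derive_eq _ _ _ _ (is_derive_minus (V := R_NormedModule) _ _ _ _ _
    (is_derive_comp pint g z _ _ (is_derive_pint _) (Hg z)) (is_derive_pint z)) _).
  unfold minus, scal, plus, opp, mult; simpl; unfold mult; simpl. field. lra.
Qed.

Lemma pint_nextn j y : pint (nextn j y) = pint y + INR j * (pint (next 0) - pint 0).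
Proof.
  induction j as [|j IH]; simpl nextn; [simpl; ring|].
  pose proof (pint_shift_const next is_derive_next (nextn j y)). rewrite S_INR. lra.
Qed.

Lemma porism n c x0 : full_turn c -> nextn n x0 = x0 + c ->
  forall y, nextn n y = y + c.
Proof.
  intros Hc Hx0 y.
  assert (Hsh : forall y, is_derive (fun z => z + c) y (weight (y + c) / weight y)).
  { intros z. pose proof (weight_pos z). rewrite weight_add_turn by exact Hc.
    replace (weight z / weight z) with 1 by (field; lra). auto_derive; auto. }
  apply (derive_pos_injective pint (fun z => / weight z) is_derive_pint).
  - intros; apply Rinv_0_lt_compat, weight_pos.
  - pose proof (pint_nextn n x0) as E0. rewrite Hx0 in E0.
    pose proof (pint_shift_const _ Hsh x0). pose proof (pint_shift_const _ Hsh y).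
    rewrite pint_nextn. lra.
Qed.

Fixpoint cos_sum (j : nat) (x : R) : R :=
  match j with
  | O => 0
  | S j => cos_sum j x - cos (nextn (S j) x - nextn j x)
  end.

Lemma is_derive_cos_sum j x :
  is_derive (cos_sum j) x (kappa * (cos (2 * x) - cos (2 * nextn j x)) / weight x).
Proof.
  pose proof (weight_pos x). induction j as [|j IH]; simpl cos_sum.
  - replace (kappa * (cos (2 * x) - cos (2 * nextn 0 x)) / weight x) with 0
      by (simpl; field; lra).
    auto_derive; auto.
  - pose proof (is_derive_nextn j x) as D0. pose proof (is_derive_nextn (S j) x) as D1.
    simpl in D1 |- *. set (y0 := nextn j x) in *.
    pose proof (corr_dx_next y0) as HW1. pose proof (corr_dy_next y0) as HW0.
    set (y1 := next y0) in *.
    refine (is_derive_eq _ _ _ _ (is_derive_minus (V := R_NormedModule) _ _ _ _ _ IH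
      (is_derive_comp (V := R_NormedModule) cos _ _ _ _ (is_derive_cos _)
        (is_derive_minus (V := R_NormedModule) _ _ _ _ _ D1 D0))) _).
    unfold minus, scal, plus, opp; simpl; unfold mult; simpl. fold y0 y1.
    rewrite <- HW1. replace (weight y0) with (- corr_dy y0 y1) by lra.
    unfold corr_dx, corr_dy.
    assert (C2 : cos (2 * y0) = cos (2 * y1) + 2 * sin (y1 + y0) * sin (y1 - y0)).
    { replace (2 * y0) with ((y1 + y0) - (y1 - y0)) by ring.
      replace (2 * y1) with ((y1 + y0) + (y1 - y0)) by ring.
      rewrite (cos_minus (y1 + y0)), (cos_plus (y1 + y0)). ring. }
    rewrite C2. change (y1 + - y0) with (y1 - y0). field. lra.
Qed.

Definition rate (x y : R) : R := (cos (y - x) + kappa * cos (y + x)) / 2.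

Lemma half_angle_rate x0 x1 x2 :
  - sin ((x2 - x0) / 2) * (corr_dx x1 x2 + corr_dy x0 x1) / 2
  = cos ((x2 - x0) / 2) * (rate x1 x2 - rate x0 x1).
Proof.
  unfold corr_dx, corr_dy, rate.
  replace (sin (x2 - x1) + kappa * sin (x2 + x1) + (- sin (x1 - x0) + kappa * sin (x1 + x0)))
    with ((sin (x2 - x1) - sin (x1 - x0)) + kappa * (sin (x2 + x1) + sin (x1 + x0))) by ring.
  replace ((cos (x2 - x1) + kappa * cos (x2 + x1)) / 2
           - (cos (x1 - x0) + kappa * cos (x1 + x0)) / 2)
    with (((cos (x2 - x1) - cos (x1 - x0)) + kappa * (cos (x2 + x1) - cos (x1 + x0))) / 2)
    by field.
  rewrite (form4 (x2 - x1) (x1 - x0)), (form3 (x2 + x1) (x1 + x0)),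
          (form2 (x2 - x1) (x1 - x0)), (form2 (x2 + x1) (x1 + x0)).
  replace ((x2 - x1 + (x1 - x0)) / 2) with ((x2 - x0) / 2) by field.
  replace ((x2 + x1 - (x1 + x0)) / 2) with ((x2 - x0) / 2) by field.
  field.
Qed.

Fixpoint cos_prod (j : nat) (x : R) : R :=
  match j with
  | O => 1
  | S j => cos_prod j x * cos ((nextn (S (S j)) x - nextn j x) / 2)
  end.

Lemma is_derive_cos_prod j x :
  is_derive (cos_prod j) x
    (cos_prod j x * (rate (nextn j x) (nextn (S j) x) - rate x (next x)) / weight x).
Proof.
  pose proof (weight_pos x). induction j as [|j IH]; simpl cos_prod.
  - replace (1 * (rate (nextn 0 x) (nextn 1 x) - rate x (next x)) / weight x) with 0
      by (simpl; field; lra).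
    auto_derive; auto.
  - pose proof (is_derive_nextn j x) as D0. pose proof (is_derive_nextn (S (S j)) x) as D2.
    simpl in D2 |- *. set (y0 := nextn j x) in *.
    pose proof (corr_dy_next y0) as HW0. set (y1 := next y0) in *.
    pose proof (corr_dx_next y1) as HW2. set (y2 := next y1) in *.
    refine (is_derive_eq _ _ _ _ (is_derive_mult (K := R_AbsRing) _ _ _ _ _ IH
      (is_derive_comp (V := R_NormedModule) (fun u => cos (u / 2)) _ _ _ _ _
        (is_derive_minus (V := R_NormedModule) _ _ _ _ _ D2 D0)) _) _).
    + auto_derive; [auto | reflexivity].
    + intros; unfold mult; simpl; ring.
    + unfold minus, scal, plus, opp, mult; simpl; unfold mult; simpl.
      rewrite <- HW2. replace (weight y0) with (- corr_dy y0 y1) by lra.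
      pose proof (half_angle_rate y0 y1 y2) as E. fold y0 y1 y2.
      change ((y2 + - y0) * / 2) with ((y2 - y0) / 2).
      change ((y2 + - y0) / 2) with ((y2 - y0) / 2).
      apply Rminus_diag_uniq.
      match type of E with ?L = ?R =>
        match goal with |- ?A - ?B = 0 =>
          replace (A - B) with (cos_prod j x / weight x * (L - R)) by (field; lra) end end.
      rewrite E. ring.
Qed.

Section Closed.

Variables (n : nat) (c : R).
Hypotheses (c_turn : full_turn c) (closed : forall y, nextn n y = y + c).

Lemma cos_sum_const y z : cos_sum n y = cos_sum n z.
Proof.
  revert y z. apply derive_zero_const. intros y.
  refine (is_derive_eq _ _ _ _ (is_derive_cos_sum n y) _).
  rewrite closed. replace (2 * (y + c)) with (2 * y + 2 * c) by ring.
  rewrite (cos_add_turn (2 * c)) by (apply full_turn_double, c_turn).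
  rewrite Rminus_diag. unfold Rdiv. now rewrite Rmult_0_r, Rmult_0_l.
Qed.

Lemma cos_prod_const y z : cos_prod n y = cos_prod n z.
Proof.
  revert y z. apply derive_zero_const. intros y.
  refine (is_derive_eq _ _ _ _ (is_derive_cos_prod n y) _).
  simpl nextn. rewrite closed, next_add_turn by exact c_turn. unfold rate.
  replace (next y + c - (y + c)) with (next y - y) by ring.
  replace (next y + c + (y + c)) with ((next y + y) + 2 * c) by ring.
  rewrite (cos_add_turn (2 * c)) by (apply full_turn_double, c_turn).
  rewrite Rminus_diag. unfold Rdiv. now rewrite Rmult_0_r, Rmult_0_l.
Qed.

End Closed.

Lemma cos_sum_as_sum m x :
  cos_sum (S m) x = sum_f_R0 (fun i => - cos (nextn (S i) x - nextn i x)) m.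
Proof.
  induction m as [|m IH]; [simpl; ring|].
  change (cos_sum (S (S m)) x) with (cos_sum (S m) x - cos (nextn (S (S m)) x - nextn (S m) x)).
  rewrite IH, tech5. ring.
Qed.

Lemma cos_prod_as_prod m x :
  cos_prod (S m) x = prod_f_R0 (fun i => cos ((nextn (S (S i)) x - nextn i x) / 2)) m.
Proof.
  induction m as [|m IH]; [simpl; ring|].
  change (cos_prod (S (S m)) x)
    with (cos_prod (S m) x * cos ((nextn (S (S (S m))) x - nextn (S m) x) / 2)).
  now rewrite IH.
Qed.

End TangentMap.

Lemma unit_angle x y : x^2 + y^2 = 1 -> exists t, cos t = x /\ sin t = y.
Proof.
  intros H. assert (Hx : -1 <= x <= 1) by (split; nra).
  destruct (Rle_lt_dec 0 y).
  - exists (acos x). split; [now apply cos_acos|]. rewrite sin_acos by auto.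
    rewrite <- (sqrt_pow2 y) by auto. f_equal. unfold Rsqr. nra.
  - exists (- acos x). split; [rewrite cos_neg; now apply cos_acos|].
    rewrite sin_neg, sin_acos by auto.
    replace y with (- (- y)) by ring. f_equal.
    rewrite <- (sqrt_pow2 (-y)) by lra. f_equal. unfold Rsqr. nra.
Qed.

Lemma on_circle_iff O r x : 0 < r ->
  on_circle O r x <-> (fst x - fst O)^2 + (snd x - snd O)^2 = r^2.
Proof.
  intros Hr. unfold on_circle, vnorm, dot, vsub; simpl. split; intros H.
  - rewrite <- H, !Rmult_1_r, sqrt_sqrt; [reflexivity|].
    apply Rplus_le_le_0_compat; apply Rle_0_sqr.
  - rewrite <- (sqrt_pow2 r) by lra. f_equal. lra.
Qed.

Lemma vnorm_polar R A : 0 <= R -> vnorm (R * cos A, R * sin A) = R.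
Proof.
  intros H. unfold vnorm, dot; cbn [fst snd].
  assert (HH := sin2_cos2 A). unfold Rsqr in HH.
  replace (R * cos A * (R * cos A) + R * sin A * (R * sin A)) with (R * R) by nra.
  now apply sqrt_square.
Qed.

Lemma cos_angle_polar p c q R1 R2 A1 A2 : 0 < R1 -> 0 < R2 ->
  vsub p c = (R1 * cos A1, R1 * sin A1) -> vsub q c = (R2 * cos A2, R2 * sin A2) ->
  cos (angle p c q) = cos (A1 - A2).
Proof.
  intros H1 H2 Ep Eq. unfold angle. rewrite Ep, Eq, !vnorm_polar by lra.
  unfold dot; cbn [fst snd].
  replace ((R1 * cos A1 * (R2 * cos A2) + R1 * sin A1 * (R2 * sin A2)) / (R1 * R2))
    with (cos (A1 - A2)) by (rewrite cos_minus; field; lra).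
  apply cos_acos, COS_bound.
Qed.

Lemma cos_angle_opposite p c q l m A B : l * m < 0 ->
  vsub p c = (l * - sin A, l * cos A) -> vsub q c = (m * - sin B, m * cos B) ->
  cos (angle p c q) = - cos (A - B).
Proof.
  intros H Ep Eq. unfold angle. rewrite Ep, Eq.
  assert (Hn : forall k C, vnorm (k * - sin C, k * cos C) = Rabs k).
  { intros k C. unfold vnorm, dot; cbn [fst snd].
    assert (HH := sin2_cos2 C). unfold Rsqr in HH.
    replace (k * - sin C * (k * - sin C) + k * cos C * (k * cos C)) with (k * k) by nra.
    now rewrite <- sqrt_Rsqr_abs. }
  rewrite !Hn, <- Rabs_mult, Rabs_left by exact H. unfold dot; cbn [fst snd].
  replace ((l * - sin A * (m * - sin B) + l * cos A * (m * cos B)) / - (l * m))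
    with (- cos (A - B)).
  - apply cos_acos. pose proof (COS_bound (A - B)). lra.
  - rewrite cos_minus. field. split; intro Z; rewrite Z in H; lra.
Qed.

Lemma sum_f_R0_rot (f : nat -> R) m :
  f 0%nat = f (S m) -> sum_f_R0 f m = sum_f_R0 (fun i => f (S i)) m.
Proof.
  intros E. destruct m as [|m]; [exact E|].
  rewrite decomp_sum by lia. simpl pred. rewrite tech5, E. ring.
Qed.

Lemma prod_f_R0_rot (f : nat -> R) m :
  f 0%nat = f (S m) -> prod_f_R0 f m = prod_f_R0 (fun i => f (S i)) m.
Proof.
  intros E.
  assert (Hs : forall k, prod_f_R0 f (S k) = f 0%nat * prod_f_R0 (fun i => f (S i)) k).
  { induction k as [|k IH]; [reflexivity|].
    change (prod_f_R0 f (S (S k))) with (prod_f_R0 f (S k) * f (S (S k))).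
    change (prod_f_R0 (fun i => f (S i)) (S k))
      with (prod_f_R0 (fun i => f (S i)) k * f (S (S k))).
    rewrite IH. ring. }
  destruct m as [|m]; [exact E|].
  rewrite Hs. change (prod_f_R0 (fun i => f (S i)) (S m))
    with (prod_f_R0 (fun i => f (S i)) m * f (S (S m))).
  rewrite <- E. apply Rmult_comm.
Qed.

Lemma prod_f_R0_ext (f g : nat -> R) m :
  (forall i, f i = g i) -> prod_f_R0 f m = prod_f_R0 g m.
Proof. intros E. induction m as [|m IH]; simpl; now rewrite ?IH, E. Qed.

Lemma vtx_mod v n j : n <> 0%nat -> vtx v n (j mod n) = vtx v n j.
Proof. intros Hn. unfold vtx. now rewrite Nat.Div0.mod_mod. Qed.

Lemma vtx_S_mod v n j : n <> 0%nat -> vtx v n (S (j mod n)) = vtx v n (S j).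
Proof.
  intros Hn. unfold vtx. f_equal.
  rewrite <- (Nat.add_1_r (j mod n)), <- (Nat.add_1_r j).
  apply Nat.Div0.add_mod_idemp_l.
Qed.

Lemma vtx_add_n v n j : n <> 0%nat -> vtx v n (j + n) = vtx v n j.
Proof.
  intros Hn. unfold vtx. f_equal.
  now rewrite Nat.Div0.add_mod, Nat.Div0.mod_same, Nat.add_0_r, Nat.Div0.mod_mod.
Qed.

Section TangentPoints.

Variables (O : pt) (r th : R).
Hypothesis r_gt0 : 0 < r.

(* The point at signed distance [s] along the tangent to the circle at its point
   of direction [h + th]; [th] is the tilt of the ellipse. *)
Definition tangent_pt (h s : R) : pt :=
  (fst O + r * cos (h + th) - s * sin (h + th), snd O + r * sin (h + th) + s * cos (h + th)).

Lemma tangent_pt_dist2 h s :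
  (fst (tangent_pt h s) - fst O)^2 + (snd (tangent_pt h s) - snd O)^2 = r^2 + s^2.
Proof.
  unfold tangent_pt; cbn [fst snd]. assert (HH := sin2_cos2 (h + th)). unfold Rsqr in HH.
  nra.
Qed.

Lemma vsub_tangent_pt_center h s : vsub (tangent_pt h s) O =
  (sqrt (r^2 + s^2) * cos (h + th + atan (s / r)),
   sqrt (r^2 + s^2) * sin (h + th + atan (s / r))).
Proof.
  unfold vsub, tangent_pt; cbn [fst snd].
  rewrite (cos_plus (h + th)), (sin_plus (h + th)), cos_atan, sin_atan.
  assert (HR : sqrt (r^2 + s^2) = r * sqrt (1 + (s / r)²)).
  { rewrite <- (sqrt_pow2 r) at 2 by lra. rewrite <- sqrt_mult by (unfold Rsqr; nra).
    f_equal. unfold Rsqr. field. lra. }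
  rewrite HR. assert (0 < sqrt (1 + (s / r)²)) by (apply sqrt_lt_R0; unfold Rsqr; nra).
  f_equal; field; lra.
Qed.

Lemma vsub_tangent_pt h s1 s2 : vsub (tangent_pt h s1) (tangent_pt h s2) =
  ((s1 - s2) * - sin (h + th), (s1 - s2) * cos (h + th)).
Proof. unfold vsub, tangent_pt; simpl. f_equal; ring. Qed.

Lemma tangent_pt_ext h h' s :
  cos h = cos h' -> sin h = sin h' -> tangent_pt h s = tangent_pt h' s.
Proof. intros C S. unfold tangent_pt. now rewrite !cos_plus, !sin_plus, C, S. Qed.

Lemma tangent_pt_flip h t : tangent_pt h t = tangent_pt (h + 2 * atan (t / r)) (- t).
Proof.
  unfold tangent_pt.
  replace (h + 2 * atan (t / r) + th) with ((h + th) + 2 * atan (t / r)) by ring.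
  rewrite cos_add_2atan, sin_add_2atan.
  assert (0 < 1 + (t / r)^2) by nra.
  f_equal; field; repeat split; try lra; nra.
Qed.

Lemma tangent_pt_inj h1 h2 s :
  tangent_pt h1 s = tangent_pt h2 s -> cos h1 = cos h2 /\ sin h1 = sin h2.
Proof.
  unfold tangent_pt. intros E. injection E. intros E2 E1.
  set (c1 := cos (h1 + th)) in *. set (s1 := sin (h1 + th)) in *.
  set (c2 := cos (h2 + th)) in *. set (s2 := sin (h2 + th)) in *.
  assert (X1 : r * c1 - s * s1 = r * c2 - s * s2) by lra.
  assert (X2 : r * s1 + s * c1 = r * s2 + s * c2) by lra.
  assert (C : c1 = c2).
  { apply Rmult_eq_reg_l with (r^2 + s^2); [|nra].
    transitivity (r * (r * c1 - s * s1) + s * (r * s1 + s * c1)); [ring|].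
    rewrite X1, X2. ring. }
  assert (S : s1 = s2).
  { apply Rmult_eq_reg_l with (r^2 + s^2); [|nra].
    transitivity (r * (r * s1 + s * c1) - s * (r * c1 - s * s1)); [ring|].
    rewrite X1, X2. ring. }
  replace h1 with ((h1 + th) - th) by ring. replace h2 with ((h2 + th) - th) by ring.
  rewrite !cos_minus, !sin_minus. fold c1 s1 c2 s2. now rewrite C, S.
Qed.

(* A point outside the circle lies on exactly two tangents, exchanged by the
   reflection in its line to the centre. *)
Lemma tangent_pt_common h1 h2 t s :
  tangent_pt h1 t = tangent_pt h2 s -> t * s < 0 ->
  s = - t /\ cos h2 = cos (h1 + 2 * atan (t / r)) /\ sin h2 = sin (h1 + 2 * atan (t / r)).
Proof.
  intros E Hts.
  assert (Hs : s = - t).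
  { pose proof (tangent_pt_dist2 h1 t). pose proof (tangent_pt_dist2 h2 s). rewrite E in H.
    assert ((s - t) * (s + t) = 0) by nra. apply Rmult_integral in H1. destruct H1; nra. }
  subst s. rewrite tangent_pt_flip in E. apply tangent_pt_inj in E as [C S].
  repeat split; auto.
Qed.

End TangentPoints.

(* A line meeting the circle in a single point meets it at the foot of the
   perpendicular from the centre: the reflected parameter [- 2 B / A - t] is a
   second root otherwise. *)
Lemma unique_root_perp px py dx dy r t :
  0 < dx^2 + dy^2 -> (px + t * dx)^2 + (py + t * dy)^2 = r^2 ->
  (forall t', (px + t' * dx)^2 + (py + t' * dy)^2 = r^2 -> t' = t) ->
  (px + t * dx) * dx + (py + t * dy) * dy = 0.
Proof.
  intros HA Ht Huniq. set (A := dx^2 + dy^2) in *. set (B := px * dx + py * dy).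
  assert (Hrefl : - 2 * B / A - t = t).
  { apply Huniq. rewrite <- Ht. unfold B, A in *. field. lra. }
  assert (A * t + B = 0).
  { apply Rmult_eq_reg_l with (2 / A); [|apply Rgt_not_eq, Rdiv_lt_0_compat; lra].
    rewrite Rmult_0_r. replace (2 / A * (A * t + B)) with (t - (- 2 * B / A - t)) by (field; lra).
    lra. }
  unfold A, B in *. nra.
Qed.

Lemma tangent_foot O r P Q : 0 < r -> tangent_to_circle O r P Q ->
  exists t,
    (fst P - fst O + t * (fst Q - fst P))^2 + (snd P - snd O + t * (snd Q - snd P))^2 = r^2 /\
    (fst P - fst O + t * (fst Q - fst P)) * (fst Q - fst P)
    + (snd P - snd O + t * (snd Q - snd P)) * (snd Q - snd P) = 0.
Proof.
  intros Hr [Hne [X0 [[[t1 Ht1] HC0] HU]]].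
  destruct P as [p1 p2], Q as [q1 q2], O as [o1 o2]. cbn [fst snd] in *.
  assert (HA : 0 < (q1 - p1)^2 + (q2 - p2)^2).
  { destruct (Req_dec (q1 - p1) 0); destruct (Req_dec (q2 - p2) 0); [|nra..].
    exfalso. apply Hne. f_equal; lra. }
  assert (Hcirc : forall t,
    (p1 - o1 + t * (q1 - p1))^2 + (p2 - o2 + t * (q2 - p2))^2 = r^2 <->
    on_circle (o1, o2) r (p1 + t * (q1 - p1), p2 + t * (q2 - p2))).
  { intros t. rewrite on_circle_iff by exact Hr. cbn [fst snd].
    split; intros H; rewrite <- H; ring. }
  subst X0. apply Hcirc in HC0. exists t1. split; [exact HC0|].
  apply (unique_root_perp _ _ _ _ _ _ HA HC0). intros t Ht. apply Hcirc in Ht.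
  assert (E : (p1 + t1 * (q1 - p1), p2 + t1 * (q2 - p2)) = (p1 + t * (q1 - p1), p2 + t * (q2 - p2)))
    by (apply HU; split; [now exists t | exact Ht]).
  injection E. intros E2 E1.
  destruct (Req_dec (q1 - p1) 0) as [Z|Z].
  - assert (q2 - p2 <> 0) by (intro Z'; rewrite Z, Z' in HA; lra).
    apply Rmult_eq_reg_r with (q2 - p2); auto. lra.
  - apply Rmult_eq_reg_r with (q1 - p1); auto. lra.
Qed.

Lemma perp_unit_multiple ux uy dx dy :
  ux^2 + uy^2 = 1 -> ux * dx + uy * dy = 0 ->
  dx = (dy * ux - dx * uy) * - uy /\ dy = (dy * ux - dx * uy) * ux.
Proof.
  intros Hu Hud. split.
  - transitivity (dx * (ux^2 + uy^2) - ux * (ux * dx + uy * dy)); [rewrite Hu, Hud|]; ring.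
  - transitivity (dy * (ux^2 + uy^2) - uy * (ux * dx + uy * dy)); [rewrite Hu, Hud|]; ring.
Qed.

Lemma tangent_side_param O r th P Q : 0 < r -> tangent_to_circle O r P Q ->
  exists h s1 s2, P = tangent_pt O r th h s1 /\ Q = tangent_pt O r th h s2 /\
    cross (vsub Q P) (vsub O P) = r * (s2 - s1).
Proof.
  intros Hr Ht. destruct (tangent_foot O r P Q Hr Ht) as (t & Hcirc & Hperp).
  destruct P as [p1 p2], Q as [q1 q2], O as [o1 o2]. cbn [fst snd] in *.
  set (dx := q1 - p1) in *. set (dy := q2 - p2) in *.
  set (ux := (p1 - o1 + t * dx) / r). set (uy := (p2 - o2 + t * dy) / r).
  assert (Hu : ux^2 + uy^2 = 1).
  { unfold ux, uy.
    replace (((p1 - o1 + t * dx) / r)^2 + ((p2 - o2 + t * dy) / r)^2)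
      with (((p1 - o1 + t * dx)^2 + (p2 - o2 + t * dy)^2) / r^2) by (field; lra).
    rewrite Hcirc. field. lra. }
  assert (Hud : ux * dx + uy * dy = 0).
  { unfold ux, uy.
    replace ((p1 - o1 + t * dx) / r * dx + (p2 - o2 + t * dy) / r * dy)
      with (((p1 - o1 + t * dx) * dx + (p2 - o2 + t * dy) * dy) / r) by (field; lra).
    rewrite Hperp. field. lra. }
  destruct (perp_unit_multiple _ _ _ _ Hu Hud) as [Hdx Hdy].
  set (lam := dy * ux - dx * uy) in *.
  destruct (unit_angle ux uy Hu) as [te [Hcos Hsin]].
  exists (te - th), (- t * lam), (- t * lam + lam).
  unfold tangent_pt, cross, vsub; cbn [fst snd]. replace (te - th + th) with te by ring.
  rewrite Hcos, Hsin.
  assert (Hpx : p1 - o1 = r * ux + t * lam * uy).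
  { assert (E : r * ux = p1 - o1 + t * dx) by (unfold ux; field; lra). rewrite Hdx in E. lra. }
  assert (Hpy : p2 - o2 = r * uy - t * lam * ux).
  { assert (E : r * uy = p2 - o2 + t * dy) by (unfold uy; field; lra). rewrite Hdy in E. lra. }
  repeat split.
  - f_equal; lra.
  - f_equal; unfold dx, dy in *; lra.
  - replace (o1 - p1) with (- (r * ux + t * lam * uy)) by lra.
    replace (o2 - p2) with (- (r * uy - t * lam * ux)) by lra.
    fold dx dy. rewrite Hdx, Hdy.
    transitivity (lam * r * (ux^2 + uy^2)); [ring | rewrite Hu; ring].
Qed.

Definition orient (ccw : bool) : R := if ccw then 1 else -1.

Lemma orient_cases ccw : orient ccw = 1 \/ orient ccw = -1.
Proof. destruct ccw; [left | right]; reflexivity. Qed.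

Lemma orient_sq ccw : orient ccw * orient ccw = 1.
Proof. destruct ccw; simpl; ring. Qed.

Lemma cos_orient ccw y : cos (orient ccw * y) = cos y.
Proof.
  destruct ccw; simpl; [now rewrite Rmult_1_l|].
  replace (-1 * y) with (- y) by ring. apply cos_neg.
Qed.

Lemma atan_orient ccw y : atan (orient ccw * y) = orient ccw * atan y.
Proof.
  destruct ccw; simpl; [now rewrite !Rmult_1_l|].
  replace (-1 * y) with (- y) by ring. rewrite atan_opp. ring.
Qed.

Lemma ell_quad_orient r a b ccw x s : 0 < a -> 0 < b ->
  ell_quad r a b (orient ccw * x) (orient ccw * s) = ell_quad r a b x s.
Proof.
  intros Ha Hb. destruct ccw; simpl; [now rewrite !Rmult_1_l|].
  replace (-1 * x) with (- x) by ring. replace (-1 * s) with (- s) by ring.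
  now apply ell_quad_opp.
Qed.

Lemma orientation_pos (ccw : bool) X :
  (if ccw then 0 < X else X < 0) -> 0 < orient ccw * X.
Proof. destruct ccw; simpl; lra. Qed.

Section Ellipse.

Variables (O : pt) (r a b th : R).
Hypotheses (r_gt0 : 0 < r) (a_gt0 : 0 < a) (b_gt0 : 0 < b).
Hypothesis circle_inside : forall x, on_circle O r x -> ellq O a b th x < 1.

Lemma ellq_tangent_pt h s : ellq O a b th (tangent_pt O r th h s) = ell_quad r a b h (s / r).
Proof.
  unfold ellq, tangent_pt, ell_quad; cbn [fst snd].
  assert (HH := sin2_cos2 th). unfold Rsqr in HH.
  assert (E1 : (fst O + r * cos (h + th) - s * sin (h + th) - fst O) * cos th +
               (snd O + r * sin (h + th) + s * cos (h + th) - snd O) * sin th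
             = r * cos h - s * sin h).
  { rewrite cos_plus, sin_plus.
    set (C := cos th) in *. set (S := sin th) in *. clearbody C S. cbn [pow] in *. nsatz. }
  assert (E2 : - (fst O + r * cos (h + th) - s * sin (h + th) - fst O) * sin th +
               (snd O + r * sin (h + th) + s * cos (h + th) - snd O) * cos th
             = r * sin h + s * cos h).
  { rewrite cos_plus, sin_plus.
    set (C := cos th) in *. set (S := sin th) in *. clearbody C S. cbn [pow] in *. nsatz. }
  rewrite E1, E2. field. repeat split; lra.
Qed.

Lemma contact_inside h : quad0 r a b h < 1.
Proof.
  assert (H := circle_inside (tangent_pt O r th h 0)).
  rewrite ellq_tangent_pt, ell_quad_expand in H by lra.
  replace (0 / r) with 0 in H by (field; lra).
  replace (quad0 r a b h) with (quad2 r a b h * 0 ^ 2 + 2 * quad1 r a b h * 0 + quad0 r a b h)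
    by ring.
  apply H. apply on_circle_iff; auto. rewrite tangent_pt_dist2. ring.
Qed.

Lemma poncelet_side (ccw : bool) P Q :
  on_ellipse O a b th P -> on_ellipse O a b th Q -> tangent_to_circle O r P Q ->
  (if ccw then 0 < cross (vsub Q P) (vsub O P) else cross (vsub Q P) (vsub O P) < 0) ->
  exists h s1 s2, P = tangent_pt O r th h s1 /\ Q = tangent_pt O r th h s2 /\
    orient ccw * s1 < 0 < orient ccw * s2.
Proof.
  intros HP HQ Ht Hor.
  destruct (tangent_side_param O r th P Q r_gt0 Ht) as (h & s1 & s2 & -> & -> & Hcr).
  exists h, s1, s2. do 2 (split; [reflexivity|]).
  apply orientation_pos in Hor. rewrite Hcr in Hor.
  unfold on_ellipse in HP, HQ. rewrite ellq_tangent_pt in HP, HQ.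
  assert (Hne : s1 / r <> s2 / r).
  { intro E. assert (s1 = s2).
    { replace s1 with (r * (s1 / r)) by (field; lra). rewrite E. field. lra. }
    subst. lra. }
  pose proof (ell_quad_roots_opposite r a b r_gt0 a_gt0 b_gt0 contact_inside h _ _ HP HQ Hne)
    as Hop.
  assert (Hs : s1 * s2 < 0).
  { replace (s1 * s2) with (r^2 * (s1 / r * (s2 / r))) by (field; apply Rgt_not_eq; exact r_gt0).
    rewrite <- (Rmult_0_r (r^2)). apply Rmult_lt_compat_l; [nra | exact Hop]. }
  pose proof (orient_sq ccw).
  assert (0 < orient ccw * (s2 - s1)) by (apply Rmult_lt_reg_l with r; lra).
  nra.
Qed.

Section Polygon.

Variables (ccw : bool) (n : nat) (v : nat -> pt).
Hypotheses (n_pos : n <> 0%nat) (v_poncelet : poncelet_ngon O r a b th ccw n v).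

Lemma vtx_on_ellipse j : on_ellipse O a b th (vtx v n j).
Proof. rewrite <- vtx_mod by exact n_pos. apply v_poncelet, Nat.mod_upper_bound, n_pos. Qed.

Lemma poncelet_tangent_params : exists hh s t : nat -> R, hh n = hh 0%nat /\
  forall j, vtx v n j = tangent_pt O r th (hh j) (s j) /\
    vtx v n (S j) = tangent_pt O r th (hh j) (t j) /\ orient ccw * s j < 0 < orient ccw * t j.
Proof.
  assert (HS : forall i, exists p : R * (R * R), (i < n)%nat ->
    vtx v n i = tangent_pt O r th (fst p) (fst (snd p)) /\
    vtx v n (S i) = tangent_pt O r th (fst p) (snd (snd p)) /\
    orient ccw * fst (snd p) < 0 < orient ccw * snd (snd p)).
  { intros i. destruct (Nat.lt_ge_cases i n) as [Hi|Hi].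
    - destruct (v_poncelet i Hi) as (He & Ht & Ho).
      destruct (poncelet_side ccw _ _ He (vtx_on_ellipse (S i)) Ht Ho) as (h & s1 & s2 & H).
      exists (h, (s1, s2)). intros _. exact H.
    - exists (0, (0, 0)). intros; lia. }
  destruct (functional_choice _ HS) as [f Hf].
  exists (fun j => fst (f (j mod n)%nat)), (fun j => fst (snd (f (j mod n)%nat))),
    (fun j => snd (snd (f (j mod n)%nat))).
  split.
  - cbv beta. now rewrite Nat.Div0.mod_same, Nat.Div0.mod_0_l.
  - intros j. destruct (Hf (j mod n)%nat (Nat.mod_upper_bound j n n_pos)) as (E1 & E2 & E3).
    rewrite vtx_mod in E1 by exact n_pos. rewrite vtx_S_mod in E2 by exact n_pos. auto.
Qed.

Section Lift.

Variables hh s t : nat -> R.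
Hypothesis hh_closed : hh n = hh 0%nat.
Hypothesis sides : forall j,
  vtx v n j = tangent_pt O r th (hh j) (s j) /\
  vtx v n (S j) = tangent_pt O r th (hh j) (t j) /\ orient ccw * s j < 0 < orient ccw * t j.

(* A continuous determination of the tangent angles along the polygon. *)
Fixpoint lift (j : nat) : R :=
  match j with Datatypes.O => hh 0%nat | S j => lift j + 2 * atan (t j / r) end.

Lemma lift_angle j : cos (lift j) = cos (hh j) /\ sin (lift j) = sin (hh j).
Proof.
  induction j as [|j [IC IS]]; [auto|].
  destruct (sides j) as (_ & E1 & S1). destruct (sides (S j)) as (E2 & _ & S2).
  rewrite E2 in E1.
  assert (Hts : t j * s (S j) < 0)
    by (destruct (orient_cases ccw) as [Ho|Ho]; rewrite Ho in *; nra).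
  destruct (tangent_pt_common O r th r_gt0 _ _ _ _ (eq_sym E1) Hts) as (_ & C & S).
  simpl lift. rewrite C, S, !cos_plus, !sin_plus, IC, IS. auto.
Qed.

Lemma vtx_lift j : vtx v n (S j) = tangent_pt O r th (lift j) (t j).
Proof.
  destruct (sides j) as (_ & E & _). destruct (lift_angle j) as [C S].
  rewrite E. now apply tangent_pt_ext.
Qed.

Definition tangent_angle (j : nat) : R := orient ccw * lift j.

Lemma tangent_angle_nextn j : tangent_angle j = nextn r a b j (tangent_angle 0).
Proof.
  induction j as [|j IH]; [reflexivity|].
  simpl nextn. rewrite <- IH. destruct (sides j) as (_ & _ & _ & Ht).
  assert (Hpos : 0 < orient ccw * t j / r) by (apply Rdiv_lt_0_compat; lra).
  assert (HE : ell_quad r a b (tangent_angle j) (orient ccw * t j / r) = 1).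
  { pose proof (vtx_on_ellipse (S j)) as He. unfold on_ellipse in He.
    rewrite vtx_lift, ellq_tangent_pt in He. rewrite <- He. unfold tangent_angle, Rdiv.
    rewrite Rmult_assoc. now apply ell_quad_orient. }
  unfold next. rewrite <- (fwd_unique _ _ _ r_gt0 a_gt0 b_gt0 contact_inside _ _ Hpos HE).
  unfold tangent_angle. simpl lift. unfold Rdiv. rewrite Rmult_assoc, atan_orient. ring.
Qed.

Lemma tangent_angle_turn : full_turn (tangent_angle n - tangent_angle 0).
Proof.
  destruct (lift_angle n) as [Cn Sn]. destruct (lift_angle 0) as [C0 S0].
  rewrite hh_closed, <- C0 in Cn. rewrite hh_closed, <- S0 in Sn.
  assert (HH := sin2_cos2 (lift 0)). unfold Rsqr in HH.
  unfold tangent_angle. rewrite <- Rmult_minus_distr_l.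
  split.
  - rewrite cos_orient, cos_minus, Cn, Sn. lra.
  - destruct (orient_cases ccw) as [Ho|Ho]; rewrite Ho;
      [rewrite Rmult_1_l | replace (-1 * (lift n - lift 0)) with (- (lift n - lift 0)) by ring;
                           rewrite sin_neg];
      rewrite sin_minus, Cn, Sn; ring.
Qed.

Lemma cos_hh_sub j k : cos (hh j - hh k) = cos (tangent_angle k - tangent_angle j).
Proof.
  destruct (lift_angle j) as [Cj Sj]. destruct (lift_angle k) as [Ck Sk].
  rewrite cos_minus, <- Cj, <- Sj, <- Ck, <- Sk, <- cos_minus.
  unfold tangent_angle. rewrite <- Rmult_minus_distr_l, cos_orient.
  replace (lift j - lift k) with (- (lift k - lift j)) by ring. apply cos_neg.
Qed.

Lemma cos_alpha_succ j :
  cos (alpha v n (S j)) = - cos (tangent_angle (S j) - tangent_angle j).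
Proof.
  unfold alpha. replace (S j + n - 1)%nat with (j + n)%nat by lia.
  rewrite vtx_add_n by exact n_pos.
  destruct (sides j) as (E0 & E1 & S1). destruct (sides (S j)) as (E2 & E3 & S2).
  rewrite (cos_angle_opposite _ _ _ (s j - t j) (t (S j) - s (S j)) (hh j + th) (hh (S j) + th)).
  - replace (hh j + th - (hh (S j) + th)) with (hh j - hh (S j)) by ring.
    now rewrite cos_hh_sub.
  - destruct (orient_cases ccw) as [Ho|Ho]; rewrite Ho in *; nra.
  - rewrite E0, E1. apply vsub_tangent_pt.
  - rewrite E3, E2. apply vsub_tangent_pt.
Qed.

Lemma cos_central_succ j :
  cos (angle (vtx v n (S j)) O (vtx v n (S (S j))))
  = cos ((tangent_angle (S (S j)) - tangent_angle j) / 2).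
Proof.
  rewrite !vtx_lift.
  assert (Hd : forall u, 0 < sqrt (r^2 + u^2)) by (intros; apply sqrt_lt_R0; nra).
  rewrite (cos_angle_polar _ _ _ _ _ _ _ (Hd _) (Hd _)
             (vsub_tangent_pt_center O r th r_gt0 _ _) (vsub_tangent_pt_center O r th r_gt0 _ _)).
  replace (atan (t j / r)) with ((lift (S j) - lift j) / 2) by (simpl; field).
  replace (atan (t (S j) / r)) with ((lift (S (S j)) - lift (S j)) / 2) by (simpl; field).
  replace (lift j + th + (lift (S j) - lift j) / 2
           - (lift (S j) + th + (lift (S (S j)) - lift (S j)) / 2))
    with (- ((lift (S (S j)) - lift j) / 2)) by field.
  unfold tangent_angle. rewrite <- Rmult_minus_distr_l, cos_neg.
  unfold Rdiv. now rewrite Rmult_assoc, cos_orient.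
Qed.

Lemma sum_cos_alpha_orbit : sum_cos_alpha v n = cos_sum r a b n (tangent_angle 0).
Proof.
  unfold sum_cos_alpha. rewrite sum_f_R0_rot.
  - rewrite (sum_eq _ (fun i => - cos (nextn r a b (S i) (tangent_angle 0)
                                      - nextn r a b i (tangent_angle 0))))
      by (intros; now rewrite cos_alpha_succ, <- !tangent_angle_nextn).
    rewrite <- cos_sum_as_sum. f_equal. lia.
  - replace (S (n - 1)) with n by lia. unfold alpha.
    replace (n + n - 1)%nat with ((n - 1) + n)%nat by lia.
    replace (S n) with (1 + n)%nat by lia. rewrite !vtx_add_n by exact n_pos.
    change (vtx v n n) with (vtx v n (0 + n)). now rewrite vtx_add_n.
Qed.

Lemma prod_cos_central_orbit : prod_cos_central O v n = cos_prod r a b n (tangent_angle 0).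
Proof.
  unfold prod_cos_central. rewrite prod_f_R0_rot.
  - rewrite (prod_f_R0_ext _ (fun i => cos ((nextn r a b (S (S i)) (tangent_angle 0)
                                             - nextn r a b i (tangent_angle 0)) / 2)))
      by (intros; now rewrite cos_central_succ, <- !tangent_angle_nextn).
    rewrite <- cos_prod_as_prod. f_equal. lia.
  - replace (S (n - 1)) with n by lia.
    replace (S n) with (1 + n)%nat by lia. rewrite vtx_add_n by exact n_pos.
    change (vtx v n n) with (vtx v n (0 + n)). now rewrite vtx_add_n.
Qed.

End Lift.

Lemma poncelet_orbit : exists x0 c, full_turn c /\ nextn r a b n x0 = x0 + c /\
  sum_cos_alpha v n = cos_sum r a b n x0 /\ prod_cos_central O v n = cos_prod r a b n x0.
Proof.
  destruct poncelet_tangent_params as (hh & s & t & Hcl & Hsides).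
  exists (tangent_angle hh t 0), (tangent_angle hh t n - tangent_angle hh t 0).
  split; [|split; [|split]].
  - apply (tangent_angle_turn hh s t Hcl Hsides).
  - rewrite <- (tangent_angle_nextn hh s t Hsides). ring.
  - apply (sum_cos_alpha_orbit hh s t Hsides).
  - apply (prod_cos_central_orbit hh s t Hsides).
Qed.

End Polygon.

End Ellipse.

Theorem corollary6p5 (O : pt) (r a b th : R) (n : nat) (ccw : bool)
    (v w : nat -> pt) :
  0 < r -> 0 < a -> 0 < b ->
  (forall x : pt, on_circle O r x -> ellq O a b th x < 1) ->
  (3 <= n)%nat ->
  poncelet_ngon O r a b th ccw n v ->
  poncelet_ngon O r a b th ccw n w ->
  sum_cos_alpha w n = sum_cos_alpha v n /\
  prod_cos_central O w n = prod_cos_central O v n.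
Proof.
  intros Hr Ha Hb Hin Hn Hv Hw.
  assert (Hn0 : n <> 0%nat) by lia.
  pose proof (contact_inside O r a b th Hr Ha Hb Hin) as Hc.
  destruct (poncelet_orbit O r a b th Hr Ha Hb Hin ccw n v Hn0 Hv)
    as (xv & c & Hturn & Hxv & -> & ->).
  destruct (poncelet_orbit O r a b th Hr Ha Hb Hin ccw n w Hn0 Hw)
    as (xw & _ & _ & _ & -> & ->).
  pose proof (porism r a b Hr Ha Hb Hc n c xv Hturn Hxv) as Hclosed.
  split.
  - exact (cos_sum_const r a b Hr Ha Hb Hc n c Hturn Hclosed xw xv).
  - exact (cos_prod_const r a b Hr Ha Hb Hc n c Hturn Hclosed xw xv).
Qed.
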